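(* Let $\mathfrak g$ be a finite-dimensional Lie algebra and equip $S(\mathfrak g)=\mathbb{C}[\mathfrak g^*]$ with the Kirillov–Kostant Poisson bracket. Then there is a Poisson-compatible preconnection $\hat\nabla$ on $\mathfrak g^*$ with $$\hat\nabla_v\,{\rm d}w=\tfrac12\,{\rm d}[v,w]\qquad (v,w\in\mathfrak g),$$ whose curvature and torsion are given, for $v,w,z\in\mathfrak g$, by $$R(v,w)\,{\rm d}z=-\tfrac14\,{\rm d}[[v,w],z],\qquad \langle T(v,w),{\rm d}z\rangle=\tfrac12\,[[v,w],z].$$
   Context: The Kirillov–Kostant bracket on $S(\mathfrak g)$ is the Poisson bracket with $\{v,w\}=[v,w]$ for $v,w\in\mathfrak g$ (viewed as linear functions on $\mathfrak g^*$), extended as a biderivation. For a function $a$, $\hat a=\{a,\cdot\}$ is its Hamiltonian vector field; for $v\in\mathfrak g$, $\hat v={\rm ad}_v$. A preconnection assigns to each function $a$ a linear map $\hat\nabla_a$ on $1$-forms with $\hat\nabla_a(b\,\xi)=\{a,b\}\xi+b\,\hat\nabla_a\xi$ and $\hat\nabla_{ab}\xi=a\,\hat\nabla_b\xi+b\,\hat\nabla_a\xi$. It is Poisson-compatible if $\hat\nabla_a{\rm d}b-\hat\nabla_b{\rm d}a={\rm d}\{a,b\}$ for all $a,b$. Its curvature is $R(a,b)=[\hat\nabla_a,\hat\nabla_b]-\hat\nabla_{\{a,b\}}$ and torsion $T(a,b)=\hat\nabla_a\hat b-\hat\nabla_b\hat a-[\hat a,\hat b]$, where for a vector field the action is defined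 by $\langle\hat\nabla_a\hat b,\xi\rangle=\hat a(\langle\hat b,\xi\rangle)-\langle\hat b,\hat\nabla_a\xi\rangle$. *)

From mathcomp Require Import all_boot all_order all_algebra.
From mathcomp Require Import mpoly.
Set Implicit Arguments. Unset Strict Implicit. Unset Printing Implicit Defensive.
Import GRing.Theory.
Local Open Scope ring_scope.

(* A Lie algebra g of dimension n over C is given by its structure constants
   in a basis e_0..e_{n-1}:  [e_i, e_j] = \sum_k c i j k e_k.
   S(g) = C[g^*] = {mpoly C[n]}, with e_i identified with the variable 'X_i. *)
Section KK.
Variables (C : numClosedFieldType) (n : nat) (c : 'I_n -> 'I_n -> 'I_n -> C).

Definition is_lie_sc : Prop :=
  [/\ forall i k, c i i k = 0,
      forall i j k, c i j k = - c j i k &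
      forall i j k l, \sum_(m < n) (c i j m * c m k l + c j k m * c m i l
                                    + c k i m * c m j l) = 0].

Definition SPoly := {mpoly C[n]}.

Definition lin (v : 'I_n -> C) : SPoly := \sum_(i < n) v i *: 'X_i.

Definition lie (v w : 'I_n -> C) : 'I_n -> C :=
  fun k => \sum_(i < n) \sum_(j < n) v i * w j * c i j k.

(* Kirillov-Kostant bracket: the biderivation with {X_i, X_j} = [e_i, e_j] *)
Definition pbr (a b : SPoly) : SPoly :=
  \sum_(i < n) \sum_(j < n) mderiv i a * mderiv j b * lin (c i j).

(* 1-forms (Kahler differentials of C[g^*], free on dX_i) and vector fields
   (derivations, free on d/dX_i), both as coefficient families. *)
Definition oneform := {ffun 'I_n -> SPoly}.
Definition vfield := {ffun 'I_n -> SPoly}.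

Definition dd (f : SPoly) : oneform := [ffun i => mderiv i f].
Definition fscale (b : SPoly) (xi : oneform) : oneform := [ffun i => b * xi i].
Definition fscaleC (k : C) (xi : oneform) : oneform := [ffun i => k *: xi i].

Definition vapp (X : vfield) (f : SPoly) : SPoly := \sum_(i < n) X i * mderiv i f.
Definition pair (X : vfield) (xi : oneform) : SPoly := \sum_(i < n) X i * xi i.
Definition ham (a : SPoly) : vfield := [ffun i => pbr a 'X_i].
Definition vbr (X Y : vfield) : vfield := [ffun i => vapp X (Y i) - vapp Y (X i)].

Definition preconnection (nabla : SPoly -> oneform -> oneform) : Prop :=
  [/\ forall a xi eta, nabla a (xi + eta) = nabla a xi + nabla a eta,
      forall a (k : C) xi, nabla a (fscaleC k xi) = fscaleC k (nabla a xi),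
      forall a b xi, nabla a (fscale b xi) = fscale (pbr a b) xi + fscale b (nabla a xi) &
      forall a b xi, nabla (a * b) xi = fscale a (nabla b xi) + fscale b (nabla a xi)].

Definition poisson_compatible (nabla : SPoly -> oneform -> oneform) : Prop :=
  forall a b, nabla a (dd b) - nabla b (dd a) = dd (pbr a b).

Definition curvature (nabla : SPoly -> oneform -> oneform) (a b : SPoly) (xi : oneform) : oneform :=
  nabla a (nabla b xi) - nabla b (nabla a xi) - nabla (pbr a b) xi.

(* <nabla_a X, xi> := \hat a(<X, xi>) - <X, nabla_a xi> *)
Definition cov_pair (nabla : SPoly -> oneform -> oneform) (a : SPoly) (X : vfield) (xi : oneform) : SPoly :=
  vapp (ham a) (pair X xi) - pair X (nabla a xi).

(* <T(a,b), xi> with T(a,b) = nabla_a \hat b - nabla_b \hat a - [\hat a, \hat b] *)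
Definition torsion_pair (nabla : SPoly -> oneform -> oneform) (a b : SPoly) (xi : oneform) : SPoly :=
  cov_pair nabla a (ham b) xi - cov_pair nabla b (ham a) xi - pair (vbr (ham a) (ham b)) xi.

End KK.

From mathcomp Require Import all_boot all_order all_algebra.
From mathcomp Require Import mpoly.
From mathcomp Require Import ring.
Set Implicit Arguments. Unset Strict Implicit. Unset Printing Implicit Defensive.
Import GRing.Theory.
Local Open Scope ring_scope.

(* Take [nabla_a xi = ({a, xi_k} + 1/2 sum_(i,j) c_ij^k (d_i a) xi_j)_k], the
   Hamiltonian derivative of the coefficients corrected by half the coadjoint
   action of [da]. The correction is [C[g*]]-bilinear in [(da, xi)], so both
   Leibniz rules hold; in [nabla_a db - nabla_b da] its two halves add up to the
   term [(d_i a)(d_j b) c_ij^k] of [d_k {a, b}], and the symmetry of second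
   derivatives matches the remaining terms. On linear functions everything reduces
   to brackets of constant vectors, and the Jacobi identity
   [[v,[w,z]] - [w,[v,z]] = [[v,w],z]] turns the curvature into
   [(1/4 - 1/2) d[[v,w],z]] and the torsion into [(3/2 - 1) [[v,w],z]]. *)

Section DoubleSums.
Variables (R : pzRingType) (I J : finType).
Implicit Types F G : I -> J -> R.

Lemma eq_big2 F G :
  (forall i j, F i j = G i j) -> \sum_i \sum_j F i j = \sum_i \sum_j G i j.
Proof. by move=> eqFG; apply: eq_bigr => i _; apply: eq_bigr. Qed.

Lemma big_split2 F G :
  \sum_i \sum_j F i j + \sum_i \sum_j G i j = \sum_i \sum_j (F i j + G i j).
Proof. by rewrite -big_split; apply: eq_bigr => i _; rewrite -big_split. Qed.

Lemma sumrB2 F G :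
  \sum_i \sum_j F i j - \sum_i \sum_j G i j = \sum_i \sum_j (F i j - G i j).
Proof. by rewrite -sumrB; apply: eq_bigr => i _; rewrite -sumrB. Qed.

Lemma mulr_suml2 F x : (\sum_i \sum_j F i j) * x = \sum_i \sum_j F i j * x.
Proof. by rewrite mulr_suml; apply: eq_bigr => i _; rewrite mulr_suml. Qed.

Lemma mulr_sumr2 F x : x * (\sum_i \sum_j F i j) = \sum_i \sum_j x * F i j.
Proof. by rewrite mulr_sumr; apply: eq_bigr => i _; rewrite mulr_sumr. Qed.

End DoubleSums.

Lemma big_rot3 (R : nmodType) (I J K : finType) (F : I -> J -> K -> R) :
  \sum_i \sum_j \sum_k F i j k = \sum_j \sum_k \sum_i F i j k.
Proof. by rewrite exchange_big; apply: eq_bigr => j _; apply: exchange_big. Qed.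

Lemma exchange_big22 (R : nmodType) (I J K L : finType) (F : I -> J -> K -> L -> R) :
  \sum_i \sum_j \sum_k \sum_l F i j k l = \sum_k \sum_l \sum_i \sum_j F i j k l.
Proof.
under eq_bigr => i _ do rewrite big_rot3.
exact: (big_rot3 (fun i k l => \sum_j F i j k l)).
Qed.

Lemma mderivXU (R : nzRingType) (n : nat) (i j : 'I_n) :
  mderiv i ('X_j : {mpoly R[n]}) = ((j == i)%:R)%:MP.
Proof.
rewrite mderivX mnm1E; case: eqP => [->|_]; last by rewrite scale0r.
have -> : (U_(i) - U_(i) = 0)%MM by apply/mnmP => k; rewrite mnmBE subnn mnm0E.
by rewrite mpolyX0 scale1r.
Qed.

Section KirillovKostantConnection.
Variables (C : numClosedFieldType) (n : nat) (c : 'I_n -> 'I_n -> 'I_n -> C).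
Hypothesis c_anti : forall i j k, c i j k = - c j i k.
Hypothesis c_jacobi : forall i j k l,
  \sum_(m < n) (c i j m * c m k l + c j k m * c m i l + c k i m * c m j l) = 0.
Implicit Types (u v w z : 'I_n -> C) (a b : SPoly C n).

Definition unit_vec (i : 'I_n) : 'I_n -> C := fun q => (i == q)%:R.

Lemma eq_lie v v' w w' : v =1 v' -> w =1 w' -> lie c v w =1 lie c v' w'.
Proof. by move=> eqv eqw k; apply: eq_big2 => i j; rewrite eqv eqw. Qed.

Lemma lieZr x v w k : lie c v (fun q => x * w q) k = x * lie c v w k.
Proof. by rewrite mulr_sumr2; apply: eq_big2 => i j; ring. Qed.

Lemma lie_sumr (W : 'I_n -> 'I_n -> C) v z k :
  \sum_i lie c v (W i) k * z i = lie c v (fun q => \sum_i W i q * z i) k.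
Proof.
under eq_bigr => i _ do rewrite mulr_suml2.
rewrite big_rot3; apply: eq_big2 => p q.
by rewrite mulr_sumr mulr_suml; apply: eq_bigr => i _; ring.
Qed.

Lemma lie_sum_unit_vecr v z k : \sum_i lie c v (unit_vec i) k * z i = lie c v z k.
Proof.
rewrite lie_sumr; apply: eq_lie => // q.
rewrite (bigD1 q) //= /unit_vec eqxx mul1r big1 ?addr0 // => i /negbTE ->.
by rewrite mul0r.
Qed.

Lemma lie_lierE u v w k : lie c u (lie c v w) k =
  \sum_i \sum_j \sum_l \sum_m u i * v j * w l * (c j l m * c i m k).
Proof.
apply: eq_bigr => i _.
rewrite -(big_rot3 (fun m j l => u i * v j * w l * (c j l m * c i m k))).
apply: eq_bigr => m _; rewrite mulr_sumr2 mulr_suml2.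
by apply: eq_big2 => j l; ring.
Qed.

Lemma lie_lielE u v w k : lie c (lie c u v) w k =
  \sum_i \sum_j \sum_l \sum_m u i * v j * w l * (c i j m * c m l k).
Proof.
rewrite exchange_big22 exchange_big /=; apply: eq_big2 => m l.
rewrite !mulr_suml2; apply: eq_big2 => i j; ring.
Qed.

Lemma lie_jacobi u v w k :
  lie c u (lie c v w) k - lie c v (lie c u w) k = lie c (lie c u v) w k.
Proof.
apply/eqP; rewrite -subr_eq0; apply/eqP.
rewrite !lie_lierE lie_lielE [X in _ - X - _]exchange_big /= -!sumrB.
apply: big1 => i _; rewrite -!sumrB; apply: big1 => j _; rewrite -!sumrB.
apply: big1 => l _; rewrite -!sumrB.
rewrite -[RHS](mulr0 (- (u i * v j * w l))) -[in RHS](c_jacobi i j l k) mulr_sumr.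
by apply: eq_bigr => m _; rewrite (c_anti m i k) (c_anti l i m) (c_anti m j k); ring.
Qed.

Lemma mderiv_lin i u : mderiv i (lin u) = (u i)%:MP.
Proof.
rewrite /lin raddf_sum (bigD1 i) //= big1 ?addr0 => [|k /negbTE nki].
  by rewrite mderivZ mderivXU eqxx -mul_mpolyC -mpolyCM mulr1.
by rewrite mderivZ mderivXU nki scaler0.
Qed.

Lemma dd_lin u : dd (lin u) = [ffun k => (u k)%:MP].
Proof. by apply/ffunP => k; rewrite !ffunE mderiv_lin. Qed.

Lemma fscaleC_dd_lin x u : fscaleC x (dd (lin u)) = dd (lin (fun k => x * u k)).
Proof. by rewrite !dd_lin; apply/ffunP => k; rewrite !ffunE -mul_mpolyC -mpolyCM. Qed.

Lemma eq_lin u u' : u =1 u' -> lin u = lin u'.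
Proof. by move=> equ; apply: eq_bigr => i _; rewrite equ. Qed.

Lemma linB u u' : lin u - lin u' = lin (fun k => u k - u' k).
Proof. by rewrite -sumrB; apply: eq_bigr => i _; rewrite scalerBl. Qed.

Lemma linZ x u : x *: lin u = lin (fun k => x * u k).
Proof. by rewrite scaler_sumr; apply: eq_bigr => i _; rewrite scalerA. Qed.

Lemma lin_mulC u x : lin u * x%:MP = lin (fun k => u k * x).
Proof. by rewrite mulrC mul_mpolyC linZ; apply: eq_lin => k; rewrite mulrC. Qed.

Lemma lin_sum (U : 'I_n -> 'I_n -> C) :
  \sum_i lin (U i) = lin (fun k => \sum_i U i k).
Proof. by rewrite exchange_big; apply: eq_bigr => k _; rewrite scaler_suml. Qed.

Lemma lin_unit_vec i : lin (unit_vec i) = 'X_i.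
Proof.
rewrite /lin (bigD1 i) //= /unit_vec eqxx scale1r big1 ?addr0 // => k /negbTE.
by rewrite eq_sym => ->; rewrite scale0r.
Qed.

Lemma lin_anti i j : lin (c j i) = - lin (c i j).
Proof. by rewrite -sumrN; apply: eq_bigr => k _; rewrite c_anti scaleNr. Qed.

Lemma pbr_lin v w : pbr c (lin v) (lin w) = lin (lie c v w).
Proof.
rewrite /pbr.
under eq_bigr => i _ do under eq_bigr => j _ do
  rewrite !mderiv_lin -mpolyCM mul_mpolyC linZ.
under eq_bigr => i _ do rewrite lin_sum.
by rewrite lin_sum.
Qed.

Lemma ham_lin w i : ham c (lin w) i = lin (lie c w (unit_vec i)).
Proof. by rewrite ffunE -lin_unit_vec pbr_lin. Qed.

Lemma sum_ham_lin w z : \sum_i ham c (lin w) i * (z i)%:MP = lin (lie c w z).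
Proof.
under eq_bigr => i _ do rewrite ham_lin lin_mulC.
by rewrite lin_sum; apply: eq_lin => k; apply: lie_sum_unit_vecr.
Qed.

Lemma vapp_lin X u : vapp X (lin u) = \sum_i X i * (u i)%:MP.
Proof. by apply: eq_bigr => i _; rewrite mderiv_lin. Qed.

Lemma pair_dd_lin X z : pair X (dd (lin z)) = \sum_i X i * (z i)%:MP.
Proof. by apply: eq_bigr => i _; rewrite ffunE mderiv_lin. Qed.

(* [nabla_a xi = sum_i (d_i a) nabla_(X_i) xi]: summed over [j], the first
   term gives [{X_i, xi_k}] and the second makes [nabla_(X_i) dX_j = 1/2 d[e_i, e_j]]. *)
Definition kk_nabla a (xi : oneform C n) : oneform C n :=
  [ffun k => \sum_i \sum_j mderiv i a * (mderiv j (xi k) * lin (c i j)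
                                         + (2^-1 * c i j k)%:MP * xi j)].

Lemma kk_nabla_preconnection : preconnection c kk_nabla.
Proof.
split=> [a xi eta | a x xi | a b xi | a b xi]; apply/ffunP => k.
- rewrite !ffunE big_split2; apply: eq_big2 => i j.
  rewrite !ffunE mderivD; ring.
- rewrite !ffunE -!mul_mpolyC mulr_sumr2; apply: eq_big2 => i j.
  rewrite !ffunE -mul_mpolyC mderiv_mulC; ring.
- rewrite !ffunE /pbr mulr_suml2 mulr_sumr2 big_split2.
  apply: eq_big2 => i j; rewrite !ffunE mderivM; ring.
- rewrite !ffunE !mulr_sumr2 big_split2; apply: eq_big2 => i j.
  rewrite mderivM; ring.
Qed.

Lemma kk_nabla_poisson_compatible : poisson_compatible c kk_nabla.
Proof.
move=> a b; apply/ffunP => k; rewrite !ffunE /pbr [X in _ - X = _]exchange_big /=.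
rewrite sumrB2 (big_morph _ (mderivD k) (mderiv0 _ k)).
under [RHS]eq_bigr => i _ do rewrite (big_morph _ (mderivD k) (mderiv0 _ k)).
apply: eq_big2 => i j.
have half_split : (c i j k)%:MP = (2^-1 * c i j k)%:MP + (2^-1 * c i j k)%:MP :> SPoly C n.
  by rewrite -mpolyCD; congr _%:MP; field.
rewrite !ffunE !mderivM mderiv_lin half_split (mderiv_comm k j b) (mderiv_comm k i a).
rewrite lin_anti (c_anti j i k) !mulrN !mpolyCN; ring.
Qed.

Lemma kk_nabla_lin_dd_lin v w :
  kk_nabla (lin v) (dd (lin w)) = fscaleC 2^-1 (dd (lin (lie c v w))).
Proof.
apply/ffunP => k; rewrite !ffunE !mderiv_lin -mul_mpolyC -mpolyCM /lie mulr_sumr2.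
rewrite (big_morph _ (@mpolyCD n C) (@mpolyC0 n C)).
under [RHS]eq_bigr => i _ do rewrite (big_morph _ (@mpolyCD n C) (@mpolyC0 n C)).
apply: eq_big2 => i j.
rewrite !ffunE !mderiv_lin mderivC !mpolyCM; ring.
Qed.

Lemma kk_curvature_lin v w z :
  curvature c kk_nabla (lin v) (lin w) (dd (lin z))
  = fscaleC (- 4^-1) (dd (lin (lie c (lie c v w) z))).
Proof.
rewrite /curvature pbr_lin !kk_nabla_lin_dd_lin !fscaleC_dd_lin.
rewrite !kk_nabla_lin_dd_lin !fscaleC_dd_lin !dd_lin.
apply/ffunP => k; rewrite !ffunE -!mpolyCB; congr _%:MP.
by rewrite !lieZr -lie_jacobi; field.
Qed.

Lemma cov_pair_lin_ham v w z :
  cov_pair c kk_nabla (lin v) (ham c (lin w)) (dd (lin z))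
  = lin (lie c v (lie c w z)) - lin (lie c w (fun k => 2^-1 * lie c v z k)).
Proof.
rewrite /cov_pair pair_dd_lin sum_ham_lin vapp_lin sum_ham_lin.
by rewrite kk_nabla_lin_dd_lin fscaleC_dd_lin pair_dd_lin sum_ham_lin.
Qed.

Lemma pair_vbr_ham_lin v w z :
  pair (vbr (ham c (lin v)) (ham c (lin w))) (dd (lin z)) = lin (lie c (lie c v w) z).
Proof.
rewrite pair_dd_lin.
under eq_bigr => i _ do rewrite ffunE !ham_lin !vapp_lin !sum_ham_lin linB lin_mulC.
rewrite lin_sum; apply: eq_lin => k.
under eq_bigr => i _ do rewrite lie_jacobi.
exact: lie_sum_unit_vecr.
Qed.

Lemma kk_torsion_lin v w z :
  torsion_pair c kk_nabla (lin v) (lin w) (dd (lin z))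
  = 2^-1 *: lin (lie c (lie c v w) z).
Proof.
rewrite /torsion_pair !cov_pair_lin_ham pair_vbr_ham_lin !linB linZ.
by apply: eq_lin => k; rewrite !lieZr -lie_jacobi; field.
Qed.

End KirillovKostantConnection.

Theorem proposition5p1p1 (C : numClosedFieldType) (n : nat)
  (c : 'I_n -> 'I_n -> 'I_n -> C) (Hlie : is_lie_sc c) :
  exists nabla : SPoly C n -> oneform C n -> oneform C n,
    [/\ preconnection c nabla,
        poisson_compatible c nabla,
        (forall v w : 'I_n -> C,
            nabla (lin v) (dd (lin w)) = fscaleC (2^-1) (dd (lin (lie c v w)))),
        (forall v w z : 'I_n -> C,
            curvature c nabla (lin v) (lin w) (dd (lin z))
            = fscaleC (- 4^-1) (dd (lin (lie c (lie c v w) z)))) &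
        (forall v w z : 'I_n -> C,
            torsion_pair c nabla (lin v) (lin w) (dd (lin z))
            = 2^-1 *: lin (lie c (lie c v w) z))].
Proof.
case: Hlie => _ c_anti c_jacobi.
exists (kk_nabla c); split.
- exact: kk_nabla_preconnection.
- exact: kk_nabla_poisson_compatible.
- exact: kk_nabla_lin_dd_lin.
- exact: kk_curvature_lin.
- exact: kk_torsion_lin.
Qed.
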